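(* Let $\lambda>0$, $\ell>0$, let $\gamma$ be one of $\gamma_{\rm sarc}^{\lambda,\ell,1}$, $\gamma_{\rm larc}^{\lambda,\ell,1}$ (these two when $\lambda\ell^2\le\hat\lambda$), or $\gamma_{\rm loop}^{\lambda,\ell,1}$, and let $L:=L[\gamma]$. Writing $\gamma=(X,Y)$, one has $X(s)+X(L-s)=\ell$ and $Y(s)=Y(L-s)$ for all $s\in[0,L]$. In addition, if $\gamma=\gamma_{\rm loop}^{\lambda,\ell,1}$, then $\gamma$ has a self-intersection: there is $s\in(0,L/2)$ with $\gamma(s)=\gamma(L-s)$.
   Context: Elliptic functions: for $q\in[0,1)$, $x\in\mathbb{R}$, $\mathrm{F}(x,q)=\int_0^x(1-q^2\sin^2\theta)^{-1/2}\,d\theta$, $\mathrm{E}(x,q)=\int_0^x(1-q^2\sin^2\theta)^{1/2}\,d\theta$, $\mathrm{K}(q)=\mathrm{F}(\pi/2,q)$, $\mathrm{E}(q)=\mathrm{E}(\pi/2,q)$; $\mathrm{am}(\cdot,q)$ is the inverse of $x\mapsto\mathrm{F}(x,q)$, $\mathrm{cn}(x,q)=\cos\mathrm{am}(x,q)$. The function $q\mapsto2\mathrm{E}(q)-\mathrm{K}(q)$ is strictly decreasing on $[0,1)$ with unique zero $q_*\in(0,1)$. On $[1/\sqrt2,1)$ let $f(q)=(4q^4-5q^2+1)\mathrm{K}(q)+(-8q^4+8q^2-1)\mathrm{E}(q)$ and $g(q)=8(2\mathrm{E}(q)-\mathrm{K}(q))^2(2q^2-1)$. $f$ has a unique zero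 $\hat q\in[1/\sqrt2,1)$; $\hat\lambda:=g(\hat q)\approx0.70107$. $g(1/\sqrt2)=0$, $g$ is strictly increasing on $[1/\sqrt2,\hat q]$, strictly decreasing on $[\hat q,q_*]$ with $g(q_* )=0$, strictly increasing on $[q_*,1)$ with $g\to\infty$ at $1$. For $c\in(0,\hat\lambda]$ let $q_1(c)\in(1/\sqrt2,\hat q]$, $q_2(c)\in[\hat q,q_* )$ solve $g(q)=c$; for $c>0$ let $q_3(c)\in(q_*,1)$ solve $g(q)=c$. Curves (arclength parametrized on $[0,2\mathrm{K}(q)/\alpha]$, so $L=2\mathrm{K}(q)/\alpha$): $\gamma_{\rm sarc}^{\lambda,\ell,1}(s)=\frac1\alpha\big(2\mathrm{E}(\mathrm{am}(\alpha s-\mathrm{K}(q),q),q)+2\mathrm{E}(q)-\alpha s,\ 2q\,\mathrm{cn}(\alpha s-\mathrm{K}(q),q)\big)$ with $q=q_1(\lambda\ell^2)$, $\alpha=\frac{2}{\ell}(2\mathrm{E}(q)-\mathrm{K}(q))$; $\gamma_{\rm larc}^{\lambda,\ell,1}$ is the same formula with $q=q_2(\lambda\ell^2)$; $\gamma_{\rm loop}^{\lambda,\ell,1}(s)=\frac1\alpha\big(-2\mathrm{E}(\mathrm{am}(\alpha s-\mathrm{K}(q),q),q)-2\mathrm{E}(q)+\alpha s,\ 2q\,\mathrm{cn}(\alpha s-\mathrm{K}(q),q)\big)$ with $q=q_3(\lambda\ell^2)$, $\alpha=\frac{2}{\ell}(\mathrm{K}(q)-2\mathrm{E}(q))$. 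*)

From Stdlib Require Import Reals ClassicalEpsilon.
From Coquelicot Require Import Coquelicot.
Open Scope R_scope.

Definition ellF (x q : R) : R :=
  RInt (fun t => / sqrt (1 - q^2 * (sin t)^2)) 0 x.
Definition ellE (x q : R) : R :=
  RInt (fun t => sqrt (1 - q^2 * (sin t)^2)) 0 x.
Definition ellK (q : R) : R := ellF (PI/2) q.
Definition ellEc (q : R) : R := ellE (PI/2) q.

(* Jacobi amplitude: the inverse of x |-> F(x,q)
   (F(.,q) is a strictly increasing bijection of R for 0 <= q < 1). *)
Definition am (u q : R) : R :=
  epsilon (inhabits 0) (fun x => ellF x q = u).
Definition cn (u q : R) : R := cos (am u q).

Definition qstar : R :=
  epsilon (inhabits 0) (fun q => 0 < q < 1 /\ 2 * ellEc q - ellK q = 0).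

Definition ff (q : R) : R :=
  (4 * q^4 - 5 * q^2 + 1) * ellK q + (-8 * q^4 + 8 * q^2 - 1) * ellEc q.
Definition gg (q : R) : R :=
  8 * (2 * ellEc q - ellK q)^2 * (2 * q^2 - 1).

Definition qhat : R :=
  epsilon (inhabits 0) (fun q => 1 / sqrt 2 <= q < 1 /\ ff q = 0).
Definition lamhat : R := gg qhat.

Definition q1 (c : R) : R :=
  epsilon (inhabits 0) (fun q => 1 / sqrt 2 < q <= qhat /\ gg q = c).
Definition q2 (c : R) : R :=
  epsilon (inhabits 0) (fun q => qhat <= q < qstar /\ gg q = c).
Definition q3 (c : R) : R :=
  epsilon (inhabits 0) (fun q => qstar < q < 1 /\ gg q = c).

Definition arc_curve (q alpha s : R) : R * R :=
  ( / alpha * (2 * ellE (am (alpha * s - ellK q) q) q + 2 * ellEc q - alpha * s),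
    / alpha * (2 * q * cn (alpha * s - ellK q) q) ).
Definition loop_curve (q alpha s : R) : R * R :=
  ( / alpha * (- 2 * ellE (am (alpha * s - ellK q) q) q - 2 * ellEc q + alpha * s),
    / alpha * (2 * q * cn (alpha * s - ellK q) q) ).

Definition alpha_arc (q l : R) : R := 2 / l * (2 * ellEc q - ellK q).
Definition alpha_loop (q l : R) : R := 2 / l * (ellK q - 2 * ellEc q).

(* gamma_sarc^{lambda,l,1}, gamma_larc^{lambda,l,1}, gamma_loop^{lambda,l,1}:
   each returned as (q, alpha), the curve being s |-> *_curve q alpha s
   on [0, 2 K(q) / alpha]. *)
Definition sarc_q (lam l : R) : R := q1 (lam * l^2).
Definition larc_q (lam l : R) : R := q2 (lam * l^2).
Definition loop_q (lam l : R) : R := q3 (lam * l^2).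

Definition gamma_sarc (lam l s : R) : R * R :=
  arc_curve (sarc_q lam l) (alpha_arc (sarc_q lam l) l) s.
Definition gamma_larc (lam l s : R) : R * R :=
  arc_curve (larc_q lam l) (alpha_arc (larc_q lam l) l) s.
Definition gamma_loop (lam l s : R) : R * R :=
  loop_curve (loop_q lam l) (alpha_loop (loop_q lam l) l) s.

Definition L_sarc (lam l : R) : R :=
  2 * ellK (sarc_q lam l) / alpha_arc (sarc_q lam l) l.
Definition L_larc (lam l : R) : R :=
  2 * ellK (larc_q lam l) / alpha_arc (larc_q lam l) l.
Definition L_loop (lam l : R) : R :=
  2 * ellK (loop_q lam l) / alpha_loop (loop_q lam l) l.

Definition symmetric_curve (gamma : R -> R * R) (L l : R) : Prop :=
  forall s, 0 <= s <= L ->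
    fst (gamma s) + fst (gamma (L - s)) = l /\ snd (gamma s) = snd (gamma (L - s)).

From Stdlib Require Import Reals ClassicalEpsilon Lra Psatz.
From Coquelicot Require Import Coquelicot.
Open Scope R_scope.

(* The reparametrisation [u = alpha s - K(q)] turns [s |-> L - s] into [u |-> - u]; since
   [am(., q)] and [E(., q)] are odd and [cos] is even, all three curves are symmetric.
   For the loop [alpha > 0], and the abscissa, as a function of the amplitude
   [p = am(alpha s - K)], vanishes at [p = - PI/2] and exceeds [l/2] at [p = - 1/2]
   (because [2 E(x) - F(x) >= x/2] for [0 <= x <= 1/2]); a point of the first half with
   abscissa [l/2] is a double point by the symmetry.
   The moduli [qstar], [qhat], [q1], [q2], [q3] are defined by choice, so their specifications
   must be shown satisfiable: [K] and [E] are locally Lipschitz, hence continuous, in [q];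
   [2E - K] is nonincreasing and positive for [q^2 <= 1/2]; [K] is unbounded as [q -> 1];
   the intermediate value theorem does the rest. *)

Lemma IVT_interv_incr (f : R -> R) (a b y : R) :
  a <= b -> (forall x, a <= x <= b -> continuity_pt f x) -> f a <= y <= f b ->
  exists x, a <= x <= b /\ f x = y.
Proof.
  intros Hab Hf [Hay Hyb].
  destruct (Req_dec (f a) y) as [Ea | Ea]; [exists a; split; [lra | exact Ea] |].
  destruct (Req_dec (f b) y) as [Eb | Eb]; [exists b; split; [lra | exact Eb] |].
  assert (Hlt : a < b) by (destruct (Req_dec a b) as [<- |]; lra).
  destruct (Ranalysis5.IVT_interv (fun x => f x - y) a b) as [x [Hx Hfx]];
    [| exact Hlt | lra | lra |].
  - intros x Hx. apply continuity_pt_minus; [now apply Hf |].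
    apply continuity_pt_const. intros ? ?; reflexivity.
  - exists x. split; [exact Hx | lra].
Qed.

Lemma IVT_interv_decr (f : R -> R) (a b y : R) :
  a <= b -> (forall x, a <= x <= b -> continuity_pt f x) -> f b <= y <= f a ->
  exists x, a <= x <= b /\ f x = y.
Proof.
  intros Hab Hf Hy.
  destruct (IVT_interv_incr (fun x => - f x) a b (- y)) as [x [Hx Hfx]]; [exact Hab | | lra |].
  - intros x Hx. apply continuity_pt_opp, Hf, Hx.
  - exists x. split; [exact Hx | lra].
Qed.

Lemma continuity_pt_lipschitz (g : R -> R) (x0 r M : R) : 0 < r ->
  (forall x, Rabs (x - x0) < r -> Rabs (g x - g x0) <= M * Rabs (x - x0)) ->
  continuity_pt g x0.
Proof.
  intros Hr Hg eps Heps.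
  assert (HM : 0 < Rabs M + 1) by (pose proof (Rabs_pos M); lra).
  exists (Rmin r (eps / (Rabs M + 1))). split.
  - apply Rmin_pos; [exact Hr | apply Rdiv_lt_0_compat; lra].
  - intros x [_ Hx]. simpl in *. unfold Rdist in *.
    pose proof (Rmin_l r (eps / (Rabs M + 1))).
    pose proof (Rmin_r r (eps / (Rabs M + 1))).
    assert (Hxe : (Rabs M + 1) * Rabs (x - x0) < eps).
    { apply (Rmult_lt_reg_r (/ (Rabs M + 1))); [apply Rinv_0_lt_compat, HM |].
      field_simplify; lra. }
    pose proof (Hg x ltac:(lra)). pose proof (Rle_abs M). pose proof (Rabs_pos (x - x0)).
    nra.
Qed.

Lemma continuity_pt_lipschitz_on_compacts (h : R -> R) (q0 : R) :
  (forall r, 0 <= r < 1 -> exists C, forall q q', Rabs q <= r -> Rabs q' <= r ->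
     Rabs (h q - h q') <= C * Rabs (q - q')) ->
  Rabs q0 < 1 -> continuity_pt h q0.
Proof.
  intros Hh Hq0. pose proof (Rabs_pos q0).
  destruct (Hh ((1 + Rabs q0) / 2)) as [C HC]; [lra |].
  apply (continuity_pt_lipschitz h q0 ((1 - Rabs q0) / 2) C); [lra |].
  intros q Hq. apply HC; [| lra].
  pose proof (Rabs_triang_inv q q0). lra.
Qed.

Section ContinuousIntegrand.

Variable f : R -> R.
Hypothesis f_cont : forall t, continuous f t.

Lemma ex_RInt_cont (a b : R) : ex_RInt f a b.
Proof. apply (@ex_RInt_continuous R_CompleteNormedModule). intros; apply f_cont. Qed.

Lemma continuity_pt_RInt_0 (x : R) : continuity_pt (fun y => RInt f 0 y) x.
Proof.
  apply continuity_pt_filterlim, (continuous_RInt_1 f 0 x).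
  apply filter_forall. intros y. apply (@RInt_correct R_CompleteNormedModule), ex_RInt_cont.
Qed.

Lemma RInt_0_sub (x y : R) : RInt f 0 y - RInt f 0 x = RInt f x y.
Proof.
  rewrite <- (RInt_Chasles f 0 x y) by apply ex_RInt_cont.
  unfold plus; simpl; ring.
Qed.

Lemma RInt_ge_const (m x y : R) : x <= y ->
  (forall t, x <= t <= y -> m <= f t) -> m * (y - x) <= RInt f x y.
Proof.
  intros Hxy Hm.
  replace (m * (y - x)) with (RInt (fun _ => m) x y)
    by (rewrite RInt_const; unfold scal; simpl; unfold mult; simpl; ring).
  apply RInt_le; [exact Hxy | apply ex_RInt_const | apply ex_RInt_cont |].
  intros t Ht. apply Hm. lra.
Qed.

Lemma RInt_le_const (m x y : R) : x <= y ->
  (forall t, x <= t <= y -> f t <= m) -> RInt f x y <= m * (y - x).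
Proof.
  intros Hxy Hm.
  replace (m * (y - x)) with (RInt (fun _ => m) x y)
    by (rewrite RInt_const; unfold scal; simpl; unfold mult; simpl; ring).
  apply RInt_le; [exact Hxy | apply ex_RInt_cont | apply ex_RInt_const |].
  intros t Ht. apply Hm. lra.
Qed.

Lemma RInt_0_opp_even (x : R) :
  (forall t, f (- t) = f t) -> RInt f 0 (- x) = - RInt f 0 x.
Proof.
  intros Heven.
  assert (H : is_RInt (fun y => opp (f (- y))) 0 x (RInt f 0 (- x))).
  { apply (is_RInt_comp_opp f 0 x). rewrite Ropp_0.
    apply (@RInt_correct R_CompleteNormedModule), ex_RInt_cont. }
  rewrite <- (is_RInt_unique _ _ _ _ H).
  rewrite (RInt_ext _ (fun y => opp (f y))) by (intros; now rewrite Heven).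
  now rewrite (@RInt_opp R_CompleteNormedModule) by apply ex_RInt_cont.
Qed.

End ContinuousIntegrand.

Lemma continuous_scal_minus (f g : R -> R) (c t : R) :
  continuous f t -> continuous g t -> continuous (fun t => c * f t - g t) t.
Proof.
  intros Hf Hg. apply (continuous_minus (fun t => c * f t) g); [| exact Hg].
  apply (continuous_scal_r c f t Hf).
Qed.

Lemma RInt_scal_minus (f g : R -> R) (c a b : R) :
  (forall t, continuous f t) -> (forall t, continuous g t) ->
  RInt (fun t => c * f t - g t) a b = c * RInt f a b - RInt g a b.
Proof.
  intros Hf Hg.
  pose proof (ex_RInt_cont f Hf a b) as If. pose proof (ex_RInt_cont g Hg a b) as Ig.
  pose proof (RInt_minus (fun t => scal c (f t)) g a b
    (@ex_RInt_scal R_NormedModule f a b c If) Ig) as Hminus.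
  pose proof (RInt_scal f a b c If) as Hscal.
  unfold minus, plus, opp, scal in *; simpl in *; unfold mult in *; simpl in *.
  transitivity (RInt (fun t => c * f t + - g t) a b);
    [apply RInt_ext; intros t _; simpl; ring |].
  rewrite Hminus, Hscal. ring.
Qed.

Lemma RInt_dist_le_const (f g : R -> R) (a b M : R) : a <= b ->
  (forall t, continuous f t) -> (forall t, continuous g t) ->
  (forall t, a <= t <= b -> Rabs (f t - g t) <= M) ->
  Rabs (RInt f a b - RInt g a b) <= (b - a) * M.
Proof.
  intros Hab Hf Hg HM.
  rewrite <- (Rmult_1_l (RInt f a b)), <- RInt_scal_minus by assumption.
  apply abs_RInt_le_const; [exact Hab | |].
  - apply ex_RInt_cont. intros t. now apply continuous_scal_minus.
  - intros t Ht. rewrite Rmult_1_l. now apply HM.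
Qed.

Definition Delta (q t : R) : R := sqrt (1 - q ^ 2 * sin t ^ 2).

Lemma Delta_opp (q t : R) : Delta q (- t) = Delta q t.
Proof. unfold Delta. rewrite sin_neg. f_equal. ring. Qed.

Lemma ellF_RInt (x q : R) : ellF x q = RInt (fun t => / Delta q t) 0 x.
Proof. reflexivity. Qed.

Lemma ellE_RInt (x q : R) : ellE x q = RInt (Delta q) 0 x.
Proof. reflexivity. Qed.

Lemma ellF_0 (q : R) : ellF 0 q = 0.
Proof. apply (@RInt_point R_CompleteNormedModule). Qed.

Lemma Delta_radicand_bounds (q t : R) : 1 - q ^ 2 <= 1 - q ^ 2 * sin t ^ 2 <= 1.
Proof.
  pose proof (SIN_bound t). assert (0 <= q ^ 2) by nra.
  assert (0 <= sin t ^ 2 <= 1) by nra. split; nra.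
Qed.

Lemma Delta_ge (q t : R) : sqrt (1 - q ^ 2) <= Delta q t.
Proof. apply sqrt_le_1_alt, Delta_radicand_bounds. Qed.

Lemma Delta_ge_of_sqr_le (q r t : R) : q ^ 2 <= r ^ 2 -> sqrt (1 - r ^ 2) <= Delta q t.
Proof.
  intros Hqr. apply Rle_trans with (sqrt (1 - q ^ 2)); [apply sqrt_le_1_alt; lra |].
  apply Delta_ge.
Qed.

Lemma Delta_le_1 (q t : R) : Delta q t <= 1.
Proof. rewrite <- sqrt_1. apply sqrt_le_1_alt, Delta_radicand_bounds. Qed.

Section FixedModulus.

Variable q : R.
Hypothesis Hq : q ^ 2 < 1.

Lemma Delta_pos (t : R) : 0 < Delta q t.
Proof. apply sqrt_lt_R0. pose proof (Delta_radicand_bounds q t). lra. Qed.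

Lemma Delta_sqr (t : R) : Delta q t ^ 2 = 1 - q ^ 2 * sin t ^ 2.
Proof.
  unfold Delta. rewrite <- Rsqr_pow2. apply Rsqr_sqrt.
  pose proof (Delta_radicand_bounds q t). lra.
Qed.

Lemma continuous_Delta (t : R) : continuous (Delta q) t.
Proof.
  apply (@ex_derive_continuous R_AbsRing R_NormedModule). unfold Delta.
  pose proof (Delta_radicand_bounds q t). auto_derive. lra.
Qed.

Lemma continuous_inv_Delta (t : R) : continuous (fun t => / Delta q t) t.
Proof. apply continuous_Rinv_comp; [apply continuous_Delta | apply Rgt_not_eq, Delta_pos]. Qed.

Lemma continuous_two_Delta_sub_inv (t : R) :
  continuous (fun t => 2 * Delta q t - / Delta q t) t.
Proof. apply continuous_scal_minus; [apply continuous_Delta | apply continuous_inv_Delta]. Qed.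

Lemma inv_Delta_ge_1 (t : R) : 1 <= / Delta q t.
Proof. rewrite <- Rinv_1. apply Rinv_le_contravar; [apply Delta_pos | apply Delta_le_1]. Qed.

Lemma two_Delta_sub_inv_ge (c t : R) : 0 <= c <= 1 - 2 * q ^ 2 * sin t ^ 2 ->
  c <= 2 * Delta q t - / Delta q t.
Proof.
  intros Hc. pose proof (Delta_pos t). pose proof (Delta_le_1 t). pose proof (Delta_sqr t).
  replace (2 * Delta q t - / Delta q t) with ((2 * Delta q t ^ 2 - 1) / Delta q t)
    by (field; lra).
  apply (Rmult_le_reg_r (Delta q t)); [lra |].
  unfold Rdiv. rewrite Rmult_assoc, Rinv_l by lra. nra.
Qed.

Lemma ellF_opp (x : R) : ellF (- x) q = - ellF x q.
Proof.
  rewrite !ellF_RInt. apply RInt_0_opp_even; [apply continuous_inv_Delta |].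
  intros t. now rewrite Delta_opp.
Qed.

Lemma ellE_opp (x : R) : ellE (- x) q = - ellE x q.
Proof. apply RInt_0_opp_even; [apply continuous_Delta | apply Delta_opp]. Qed.

Lemma ellF_increment_ge (x y : R) : x <= y -> y - x <= ellF y q - ellF x q.
Proof.
  intros Hxy. rewrite !ellF_RInt, RInt_0_sub by apply continuous_inv_Delta.
  rewrite <- (Rmult_1_l (y - x)).
  apply RInt_ge_const; [apply continuous_inv_Delta | exact Hxy |].
  intros t _. apply inv_Delta_ge_1.
Qed.

Lemma ellF_lt (x y : R) : x < y -> ellF x q < ellF y q.
Proof. intros Hxy. pose proof (ellF_increment_ge x y). lra. Qed.

Lemma ellF_inj (x y : R) : ellF x q = ellF y q -> x = y.
Proof.
  intros E. destruct (Rtotal_order x y) as [H | [H | H]];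
    [apply ellF_lt in H | exact H | apply ellF_lt in H]; lra.
Qed.

Lemma continuity_pt_ellF (x : R) : continuity_pt (fun y => ellF y q) x.
Proof. exact (continuity_pt_RInt_0 _ continuous_inv_Delta x). Qed.

Lemma continuity_pt_ellE (x : R) : continuity_pt (fun y => ellE y q) x.
Proof. exact (continuity_pt_RInt_0 _ continuous_Delta x). Qed.

Lemma ellF_am (u : R) : ellF (am u q) q = u.
Proof.
  unfold am. apply epsilon_spec.
  pose proof (ellF_increment_ge 0 (Rabs u) (Rabs_pos u)) as HF.
  rewrite ellF_0 in HF.
  destruct (IVT_interv_incr (fun x => ellF x q) (- Rabs u) (Rabs u) u) as [x [_ Hx]].
  - pose proof (Rabs_pos u). lra.
  - intros x _. apply continuity_pt_ellF.
  - rewrite ellF_opp. pose proof (Rle_abs u). pose proof (Rle_abs (- u)).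
    rewrite Rabs_Ropp in *. lra.
  - exists x. exact Hx.
Qed.

Lemma am_ellF (x : R) : am (ellF x q) q = x.
Proof. apply ellF_inj, ellF_am. Qed.

Lemma am_opp (u : R) : am (- u) q = - am u q.
Proof. apply ellF_inj. now rewrite ellF_opp, !ellF_am. Qed.

Lemma ellK_pos : 0 < ellK q.
Proof.
  pose proof (ellF_increment_ge 0 (PI / 2)) as HF. rewrite ellF_0 in HF.
  pose proof PI2_1. unfold ellK. lra.
Qed.

Lemma ellEc_bounds : 0 < ellEc q <= PI / 2.
Proof.
  pose proof PI2_1. unfold ellEc. rewrite ellE_RInt. split.
  - apply Rlt_le_trans with (sqrt (1 - q ^ 2) * (PI / 2 - 0)).
    + apply Rmult_lt_0_compat; [apply sqrt_lt_R0 |]; lra.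
    + apply RInt_ge_const; [apply continuous_Delta | lra |].
      intros t _. apply Delta_ge.
  - apply Rle_trans with (1 * (PI / 2 - 0)); [| lra].
    apply RInt_le_const; [apply continuous_Delta | lra |].
    intros t _. apply Delta_le_1.
Qed.

Lemma two_ellE_sub_ellF_RInt (x : R) :
  2 * ellE x q - ellF x q = RInt (fun t => 2 * Delta q t - / Delta q t) 0 x.
Proof.
  rewrite RInt_scal_minus; [reflexivity | apply continuous_Delta | apply continuous_inv_Delta].
Qed.

Lemma two_ellE_sub_ellF_ge (x : R) : 0 <= x <= 1 / 2 -> x / 2 <= 2 * ellE x q - ellF x q.
Proof.
  intros Hx. rewrite two_ellE_sub_ellF_RInt.
  replace (x / 2) with (1 / 2 * (x - 0)) by field.
  apply RInt_ge_const; [apply continuous_two_Delta_sub_inv | lra |].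
  intros t Ht. apply two_Delta_sub_inv_ge.
  assert (Hsin : 0 <= sin t <= 1 / 2).
  { split; [apply sin_ge_0; pose proof PI2_1; lra |].
    destruct (Req_dec t 0) as [-> | Ht0]; [rewrite sin_0; lra |].
    pose proof (sin_lt_x t ltac:(lra)). lra. }
  assert (0 <= q ^ 2) by nra. nra.
Qed.

End FixedModulus.

Lemma am_reflect (q alpha s : R) : q ^ 2 < 1 -> alpha <> 0 ->
  am (alpha * (2 * ellK q / alpha - s) - ellK q) q = - am (alpha * s - ellK q) q.
Proof. intros Hq Ha. rewrite <- am_opp by exact Hq. f_equal. field. exact Ha. Qed.

Lemma arc_curve_symmetric (q l : R) : q ^ 2 < 1 -> 0 < l -> 2 * ellEc q - ellK q <> 0 ->
  symmetric_curve (arc_curve q (alpha_arc q l)) (2 * ellK q / alpha_arc q l) l.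
Proof.
  intros Hq Hl HD s _.
  assert (Ha : alpha_arc q l <> 0).
  { apply Rmult_integral_contrapositive_currified; [| exact HD].
    apply Rgt_not_eq, Rdiv_lt_0_compat; lra. }
  unfold arc_curve, cn; simpl. rewrite am_reflect, ellE_opp, cos_neg by assumption.
  split; [| reflexivity].
  unfold alpha_arc in *. field. split; [lra | exact HD].
Qed.

Lemma loop_curve_symmetric (q l : R) : q ^ 2 < 1 -> 0 < l -> ellK q - 2 * ellEc q <> 0 ->
  symmetric_curve (loop_curve q (alpha_loop q l)) (2 * ellK q / alpha_loop q l) l.
Proof.
  intros Hq Hl HD s _.
  assert (Ha : alpha_loop q l <> 0).
  { apply Rmult_integral_contrapositive_currified; [| exact HD].
    apply Rgt_not_eq, Rdiv_lt_0_compat; lra. }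
  unfold loop_curve, cn; simpl. rewrite am_reflect, ellE_opp, cos_neg by assumption.
  split; [| reflexivity].
  unfold alpha_loop in *. field. split; [lra | exact HD].
Qed.

Lemma symmetric_curve_midpoint (gamma : R -> R * R) (L l s : R) :
  symmetric_curve gamma L l -> 0 <= s <= L -> fst (gamma s) = l / 2 ->
  gamma s = gamma (L - s).
Proof.
  intros Hsym Hs Hx. destruct (Hsym s Hs) as [HX HY].
  destruct (gamma s) as [x y], (gamma (L - s)) as [x' y']. simpl in *. f_equal; lra.
Qed.

Lemma loop_curve_self_intersection (q l : R) :
  q ^ 2 < 1 -> 0 < l -> 0 < ellK q - 2 * ellEc q ->
  exists s, 0 < s < 2 * ellK q / alpha_loop q l / 2 /\
    loop_curve q (alpha_loop q l) s =
    loop_curve q (alpha_loop q l) (2 * ellK q / alpha_loop q l - s).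
Proof.
  intros Hq Hl HD.
  pose proof (loop_curve_symmetric q l Hq Hl ltac:(lra)) as Hsym.
  assert (Ha : 0 < alpha_loop q l).
  { apply Rmult_lt_0_compat; [apply Rdiv_lt_0_compat |]; lra. }
  set (a := alpha_loop q l) in *.
  (* The abscissa at the point with amplitude [p], i.e. at [s = (F(p) + K) / a]. *)
  set (X := fun p => / a * (ellF p q - 2 * ellE p q + ellK q - 2 * ellEc q)).
  assert (HX : forall p, fst (loop_curve q a ((ellF p q + ellK q) / a)) = X p).
  { intros p. unfold loop_curve, X; simpl.
    replace (a * ((ellF p q + ellK q) / a) - ellK q) with (ellF p q) by (field; lra).
    rewrite am_ellF by exact Hq. field. lra. }
  pose proof PI2_1.
  assert (HX0 : X (- (PI / 2)) = 0).
  { unfold X. rewrite ellF_opp, ellE_opp by exact Hq. unfold ellK, ellEc. ring. }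
  assert (HX1 : l / 2 < X (- (1 / 2))).
  { unfold X. rewrite ellF_opp, ellE_opp by exact Hq.
    pose proof (two_ellE_sub_ellF_ge q Hq (1 / 2) ltac:(lra)).
    replace (l / 2) with (/ a * (ellK q - 2 * ellEc q)) by (unfold a, alpha_loop; field; lra).
    apply Rmult_lt_compat_l; [apply Rinv_0_lt_compat |]; lra. }
  destruct (IVT_interv_incr X (- (PI / 2)) (- (1 / 2)) (l / 2)) as [p [Hp HXp]];
    [lra | | lra |].
  { intros p _. pose proof (continuity_pt_ellF q Hq p) as HF.
    pose proof (continuity_pt_ellE q Hq p) as HE.
    set (F := fun y => ellF y q) in HF. set (E := fun y => ellE y q) in HE.
    change (continuity_pt (fun p => / a * (F p - 2 * E p + ellK q - 2 * ellEc q)) p).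
    clearbody F E a. reg. }
  assert (Hp0 : - (PI / 2) < p) by (destruct (Req_dec p (- (PI / 2))) as [-> |]; lra).
  pose proof (ellF_lt q Hq _ _ Hp0) as HFlo.
  rewrite ellF_opp in HFlo by exact Hq. fold (ellK q) in HFlo.
  pose proof (ellF_lt q Hq p 0 ltac:(lra)) as HFhi. rewrite ellF_0 in HFhi.
  assert (Hia : 0 < / a) by (apply Rinv_0_lt_compat; exact Ha).
  assert (Hs : 0 < (ellF p q + ellK q) / a < 2 * ellK q / a / 2).
  { replace (2 * ellK q / a / 2) with (ellK q / a) by (field; lra). unfold Rdiv.
    split; [apply Rmult_lt_0_compat | apply Rmult_lt_compat_r]; lra. }
  exists ((ellF p q + ellK q) / a). split; [exact Hs |].
  apply (symmetric_curve_midpoint _ _ l); [exact Hsym | lra |].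
  rewrite HX. exact HXp.
Qed.

Lemma pow2_le_of_Rabs_le (x r : R) : Rabs x <= r -> x ^ 2 <= r ^ 2.
Proof. intros Hx. rewrite <- pow2_abs. pose proof (Rabs_pos x). nra. Qed.

Section ModulusLipschitz.

Variables r q q' t : R.
Hypothesis Hr : 0 <= r < 1.
Hypothesis Hq : Rabs q <= r.
Hypothesis Hq' : Rabs q' <= r.

Let Hq_sqr : q ^ 2 <= r ^ 2 := pow2_le_of_Rabs_le q r Hq.
Let Hq'_sqr : q' ^ 2 <= r ^ 2 := pow2_le_of_Rabs_le q' r Hq'.

Lemma Delta_lipschitz :
  Rabs (Delta q t - Delta q' t) <= Rabs (q - q') / sqrt (1 - r ^ 2).
Proof.
  assert (Hm : 0 < sqrt (1 - r ^ 2)) by (apply sqrt_lt_R0; nra).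
  pose proof (Delta_ge_of_sqr_le q r t Hq_sqr) as Hd.
  pose proof (Delta_ge_of_sqr_le q' r t Hq'_sqr) as Hd'.
  assert (Hprod : Rabs (Delta q t - Delta q' t) * (Delta q t + Delta q' t)
                  <= 2 * Rabs (q - q')).
  { rewrite <- (Rabs_right (Delta q t + Delta q' t)) by lra. rewrite <- Rabs_mult.
    replace ((Delta q t - Delta q' t) * (Delta q t + Delta q' t))
      with (Delta q t ^ 2 - Delta q' t ^ 2) by ring.
    rewrite !Delta_sqr by nra.
    replace (1 - q ^ 2 * sin t ^ 2 - (1 - q' ^ 2 * sin t ^ 2))
      with ((q' - q) * (q' + q) * sin t ^ 2) by ring.
    rewrite !Rabs_mult, (Rabs_minus_sym q' q).
    assert (Hsum : Rabs (q' + q) <= 2) by (pose proof (Rabs_triang q' q); lra).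
    assert (Hsin : Rabs (sin t ^ 2) <= 1).
    { pose proof (SIN_bound t). rewrite Rabs_right by nra. nra. }
    pose proof (Rabs_pos (q - q')). pose proof (Rabs_pos (q' + q)).
    pose proof (Rabs_pos (sin t ^ 2)).
    replace (2 * Rabs (q - q')) with (Rabs (q - q') * 2 * 1) by ring.
    apply Rmult_le_compat; [nra | lra | nra | exact Hsin]. }
  apply (Rmult_le_reg_r (2 * sqrt (1 - r ^ 2))); [lra |].
  replace (Rabs (q - q') / sqrt (1 - r ^ 2) * (2 * sqrt (1 - r ^ 2)))
    with (2 * Rabs (q - q')) by (field; lra).
  pose proof (Rabs_pos (Delta q t - Delta q' t)). nra.
Qed.

Lemma inv_Delta_lipschitz :
  Rabs (/ Delta q t - / Delta q' t) <= Rabs (q - q') / sqrt (1 - r ^ 2) ^ 3.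
Proof.
  assert (Hm : 0 < sqrt (1 - r ^ 2)) by (apply sqrt_lt_R0; nra).
  pose proof (Delta_ge_of_sqr_le q r t Hq_sqr) as Hd.
  pose proof (Delta_ge_of_sqr_le q' r t Hq'_sqr) as Hd'.
  set (m := sqrt (1 - r ^ 2)) in *.
  replace (/ Delta q t - / Delta q' t)
    with ((Delta q' t - Delta q t) * / (Delta q t * Delta q' t)) by (field; lra).
  rewrite Rabs_mult, Rabs_minus_sym, (Rabs_right (/ _)) by (left; apply Rinv_0_lt_compat; nra).
  apply Rle_trans with (Rabs (q - q') / m * / (m * m)).
  - apply Rmult_le_compat; [apply Rabs_pos | left; apply Rinv_0_lt_compat; nra
      | apply Delta_lipschitz |].
    apply Rinv_le_contravar; [nra | apply Rmult_le_compat; lra].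
  - right. field. lra.
Qed.

End ModulusLipschitz.

Lemma continuity_pt_ellK (q0 : R) : Rabs q0 < 1 -> continuity_pt ellK q0.
Proof.
  apply continuity_pt_lipschitz_on_compacts. intros r Hr.
  exists (PI / 2 / sqrt (1 - r ^ 2) ^ 3). intros q q' Hq Hq'.
  pose proof (pow2_le_of_Rabs_le q r Hq). pose proof (pow2_le_of_Rabs_le q' r Hq').
  pose proof PI2_1.
  unfold ellK. rewrite !ellF_RInt.
  replace (PI / 2 / sqrt (1 - r ^ 2) ^ 3 * Rabs (q - q'))
    with ((PI / 2 - 0) * (Rabs (q - q') / sqrt (1 - r ^ 2) ^ 3)) by (unfold Rdiv; ring).
  apply RInt_dist_le_const; [lra | apply continuous_inv_Delta; nra
    | apply continuous_inv_Delta; nra |].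
  intros t _. now apply inv_Delta_lipschitz.
Qed.

Lemma continuity_pt_ellEc (q0 : R) : Rabs q0 < 1 -> continuity_pt ellEc q0.
Proof.
  apply continuity_pt_lipschitz_on_compacts. intros r Hr.
  exists (PI / 2 / sqrt (1 - r ^ 2)). intros q q' Hq Hq'.
  pose proof (pow2_le_of_Rabs_le q r Hq). pose proof (pow2_le_of_Rabs_le q' r Hq').
  pose proof PI2_1.
  unfold ellEc. rewrite !ellE_RInt.
  replace (PI / 2 / sqrt (1 - r ^ 2) * Rabs (q - q'))
    with ((PI / 2 - 0) * (Rabs (q - q') / sqrt (1 - r ^ 2))) by (unfold Rdiv; ring).
  apply RInt_dist_le_const; [lra | apply continuous_Delta; nra
    | apply continuous_Delta; nra |].
  intros t _. now apply Delta_lipschitz.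
Qed.

Lemma Delta_antitone (q q' t : R) : 0 <= q <= q' -> Delta q' t <= Delta q t.
Proof.
  intros Hqq'. apply sqrt_le_1_alt.
  assert (q ^ 2 <= q' ^ 2) by nra. pose proof (pow2_ge_0 (sin t)). nra.
Qed.

Lemma ellK_le (q q' : R) : 0 <= q <= q' -> q' < 1 -> ellK q <= ellK q'.
Proof.
  intros Hqq' Hq'. assert (q' ^ 2 < 1) by nra. assert (q ^ 2 < 1) by nra.
  pose proof PI2_1. unfold ellK. rewrite !ellF_RInt.
  apply RInt_le; [lra | apply ex_RInt_cont, continuous_inv_Delta; lra
    | apply ex_RInt_cont, continuous_inv_Delta; lra |].
  intros t _. apply Rinv_le_contravar; [now apply Delta_pos | now apply Delta_antitone].
Qed.

Lemma two_ellEc_sub_ellK_antitone (q q' : R) : 0 <= q <= q' -> q' < 1 ->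
  2 * ellEc q' - ellK q' <= 2 * ellEc q - ellK q.
Proof.
  intros Hqq' Hq'. assert (q' ^ 2 < 1) by nra. assert (q ^ 2 < 1) by nra.
  pose proof PI2_1. unfold ellEc, ellK. rewrite !two_ellE_sub_ellF_RInt by lra.
  apply RInt_le; [lra | apply ex_RInt_cont, continuous_two_Delta_sub_inv; lra
    | apply ex_RInt_cont, continuous_two_Delta_sub_inv; lra |].
  intros t _. pose proof (Delta_antitone q q' t Hqq').
  assert (/ Delta q t <= / Delta q' t) by (apply Rinv_le_contravar; [apply Delta_pos |]; lra).
  lra.
Qed.

Lemma two_ellEc_sub_ellK_pos (q : R) : q ^ 2 <= 1 / 2 -> 0 < 2 * ellEc q - ellK q.
Proof.
  intros Hq. assert (Hq1 : q ^ 2 < 1) by lra. pose proof PI2_1.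
  pose proof (two_ellE_sub_ellF_ge q Hq1 (1 / 2) ltac:(lra)) as Hhead.
  assert (Htail : 0 * (PI / 2 - 1 / 2)
                  <= RInt (fun t => 2 * Delta q t - / Delta q t) (1 / 2) (PI / 2)).
  { apply RInt_ge_const; [apply continuous_two_Delta_sub_inv, Hq1 | lra |].
    intros t _. apply two_Delta_sub_inv_ge; [exact Hq1 |].
    pose proof (SIN_bound t). assert (0 <= q ^ 2) by nra. assert (sin t ^ 2 <= 1) by nra.
    nra. }
  rewrite <- (RInt_0_sub _ (continuous_two_Delta_sub_inv q Hq1)),
    <- !two_ellE_sub_ellF_RInt in Htail by exact Hq1.
  unfold ellEc, ellK. lra.
Qed.

Lemma is_RInt_inv_reflected (d b : R) : 0 < d -> 0 <= b ->
  is_RInt (fun t => / (d + (b - t))) 0 b (ln (d + b) - ln d).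
Proof.
  intros Hd Hb.
  assert (H : is_RInt (fun t => / (d + (b - t))) 0 b
                (minus (- ln (d + (b - b))) (- ln (d + (b - 0))))).
  { apply (@is_RInt_derive R_CompleteNormedModule (fun t => - ln (d + (b - t))));
      intros x Hx; rewrite Rmin_left, Rmax_right in Hx by lra.
    - auto_derive; [lra | field; lra].
    - apply (@ex_derive_continuous R_AbsRing R_NormedModule). auto_derive. lra. }
  replace (ln (d + b) - ln d) with (minus (- ln (d + (b - b))) (- ln (d + (b - 0)))).
  - exact H.
  - unfold minus, plus, opp; simpl. replace (d + (b - b)) with d by ring.
    replace (d + (b - 0)) with (d + b) by ring. ring.
Qed.

(* At [q = sqrt (1 - d^2)], [Delta q t ^ 2 = cos t ^ 2 + d^2 sin t ^ 2 <= (d + (PI/2 - t))^2],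
   so [K(q) >= ln (d + PI/2) - ln d], which is large for small [d]. *)
Lemma ellK_unbounded (M : R) : exists q, 0 <= q < 1 /\ M < ellK q.
Proof.
  set (d := / (1 + exp M)).
  pose proof (exp_pos M) as HexpM.
  assert (Hd : 0 < d) by (apply Rinv_0_lt_compat; lra).
  assert (Hd1 : d < 1).
  { unfold d. rewrite <- Rinv_1. apply Rinv_lt_contravar; lra. }
  assert (Hsqr : sqrt (1 - d ^ 2) ^ 2 = 1 - d ^ 2).
  { rewrite <- Rsqr_pow2, Rsqr_sqrt; [reflexivity | nra]. }
  set (q := sqrt (1 - d ^ 2)) in *.
  assert (Hq : 0 <= q < 1).
  { split; [apply sqrt_pos |]. rewrite <- sqrt_1. apply sqrt_lt_1_alt. nra. }
  exists q. split; [exact Hq |].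
  pose proof PI2_1.
  assert (Hlog : ln (d + PI / 2) - ln d <= ellK q).
  { rewrite <- (is_RInt_unique _ _ _ _ (is_RInt_inv_reflected d (PI / 2) Hd ltac:(lra))).
    unfold ellK. rewrite ellF_RInt.
    apply RInt_le; [lra | eexists; apply is_RInt_inv_reflected; lra
      | apply ex_RInt_cont, continuous_inv_Delta; nra |].
    intros t Ht.
    assert (Hcos : 0 <= cos t <= PI / 2 - t).
    { split; [apply cos_ge_0; lra |].
      rewrite <- sin_shift. left. apply sin_lt_x. lra. }
    pose proof (SIN_bound t). pose proof (sin2_cos2 t) as Hpyth. unfold Rsqr in Hpyth.
    apply Rinv_le_contravar; [apply Delta_pos; nra |].
    rewrite <- (sqrt_pow2 (d + (PI / 2 - t))) by lra. apply sqrt_le_1_alt.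
    rewrite Hsqr. nra. }
  assert (Hbig : M < ln (d + PI / 2) - ln d).
  { rewrite <- ln_div by lra. rewrite <- (ln_exp M) at 1. apply ln_increasing; [apply exp_pos |].
    replace ((d + PI / 2) / d) with (1 + PI / 2 * (1 + exp M)) by (unfold d; field; lra).
    nra. }
  lra.
Qed.

Lemma continuity_pt_two_ellEc_sub_ellK (q : R) : Rabs q < 1 ->
  continuity_pt (fun q => 2 * ellEc q - ellK q) q.
Proof.
  intros Hq. pose proof (continuity_pt_ellK q Hq). pose proof (continuity_pt_ellEc q Hq). reg.
Qed.

Lemma continuity_pt_gg (q : R) : Rabs q < 1 -> continuity_pt gg q.
Proof.
  intros Hq. pose proof (continuity_pt_ellK q Hq). pose proof (continuity_pt_ellEc q Hq).
  unfold gg. reg.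
Qed.

Lemma continuity_pt_ff (q : R) : Rabs q < 1 -> continuity_pt ff q.
Proof.
  intros Hq. pose proof (continuity_pt_ellK q Hq). pose proof (continuity_pt_ellEc q Hq).
  unfold ff. reg.
Qed.

Lemma inv_sqrt2_pos : 0 < 1 / sqrt 2.
Proof. apply Rdiv_lt_0_compat; [lra | apply sqrt_lt_R0; lra]. Qed.

Lemma inv_sqrt2_sqr : (1 / sqrt 2) ^ 2 = 1 / 2.
Proof.
  assert (H2 : sqrt 2 ^ 2 = 2) by (rewrite <- Rsqr_pow2; apply Rsqr_sqrt; lra).
  assert (0 < sqrt 2) by (apply sqrt_lt_R0; lra).
  replace ((1 / sqrt 2) ^ 2) with (1 / sqrt 2 ^ 2) by (field; lra).
  now rewrite H2.
Qed.

Lemma qstar_spec : 0 < qstar < 1 /\ 2 * ellEc qstar - ellK qstar = 0.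
Proof.
  unfold qstar. apply epsilon_spec.
  destruct (ellK_unbounded PI) as [qbig [Hqbig HK]].
  pose proof (ellEc_bounds qbig ltac:(nra)).
  pose proof (two_ellEc_sub_ellK_pos 0 ltac:(lra)) as HD0.
  destruct (IVT_interv_decr (fun q => 2 * ellEc q - ellK q) 0 qbig 0) as [q [Hq HD]];
    [lra | | lra |].
  - intros q Hq. apply continuity_pt_two_ellEc_sub_ellK. rewrite Rabs_right; lra.
  - exists q. split; [| exact HD].
    split; [destruct (Req_dec q 0) as [-> |]; lra | lra].
Qed.

Lemma qstar_sqr_gt : 1 / 2 < qstar ^ 2.
Proof.
  destruct qstar_spec as [_ HD]. destruct (Rlt_le_dec (1 / 2) (qstar ^ 2)) as [H | H];
    [exact H |].
  pose proof (two_ellEc_sub_ellK_pos qstar H). lra.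
Qed.

Lemma two_ellEc_sub_ellK_nonpos (q : R) : qstar <= q < 1 -> 2 * ellEc q - ellK q <= 0.
Proof.
  intros Hq. destruct qstar_spec as [Hs HD].
  pose proof (two_ellEc_sub_ellK_antitone qstar q ltac:(lra) ltac:(lra)). lra.
Qed.

Lemma qhat_spec : 1 / sqrt 2 <= qhat < 1 /\ ff qhat = 0.
Proof.
  unfold qhat. apply epsilon_spec.
  destruct qstar_spec as [Hs HD]. pose proof qstar_sqr_gt.
  pose proof inv_sqrt2_sqr. pose proof inv_sqrt2_pos.
  assert (Hff_qstar : ff qstar = ellEc qstar * (1 - 2 * qstar ^ 2)).
  { unfold ff. replace (ellK qstar) with (2 * ellEc qstar) by lra. ring. }
  assert (Hff_s2 : ff (1 / sqrt 2) = (2 * ellEc (1 / sqrt 2) - ellK (1 / sqrt 2)) / 2).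
  { unfold ff. replace ((1 / sqrt 2) ^ 4) with (((1 / sqrt 2) ^ 2) ^ 2) by ring.
    rewrite inv_sqrt2_sqr. field. }
  pose proof (ellEc_bounds qstar ltac:(nra)).
  pose proof (two_ellEc_sub_ellK_pos (1 / sqrt 2) ltac:(lra)).
  destruct (IVT_interv_decr ff (1 / sqrt 2) qstar 0) as [q [Hq Hf]]; [nra | | split; nra |].
  - intros q Hq. apply continuity_pt_ff. rewrite Rabs_right; lra.
  - exists q. split; [lra | exact Hf].
Qed.

(* If [qhat >= qstar], then [K >= 2 E] at [qhat] and [f(qhat) = 0] force [qhat^2 = 1/2],
   where [g] vanishes. *)
Lemma qhat_lt_qstar : 0 < lamhat -> qhat < qstar.
Proof.
  intros Hlam. destruct qstar_spec as [Hs _]. destruct qhat_spec as [Hh Hff].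
  pose proof inv_sqrt2_sqr. pose proof inv_sqrt2_pos.
  destruct (Rlt_le_dec qhat qstar) as [Hlt | Hge]; [exact Hlt | exfalso].
  pose proof (two_ellEc_sub_ellK_nonpos qhat ltac:(lra)) as HD.
  assert (Ha : 1 / 2 <= qhat ^ 2 < 1) by nra.
  destruct (ellEc_bounds qhat ltac:(lra)) as [HE _].
  assert (Hff_le : ff qhat <= ellEc qhat * (1 - 2 * qhat ^ 2)).
  { unfold ff. replace (qhat ^ 4) with ((qhat ^ 2) ^ 2) by ring.
    set (a := qhat ^ 2) in *.
    assert (4 * a ^ 2 - 5 * a + 1 <= 0) by nra.
    assert ((4 * a ^ 2 - 5 * a + 1) * ellK qhat <= (4 * a ^ 2 - 5 * a + 1) * (2 * ellEc qhat))
      by (apply Rmult_le_compat_neg_l; lra).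
    lra. }
  assert (qhat ^ 2 <= 1 / 2) by nra.
  unfold lamhat, gg in Hlam. replace (qhat ^ 2) with (1 / 2) in Hlam by lra. lra.
Qed.

Section InverseOfG.

Variable c : R.
Hypothesis Hc : 0 < c.

Lemma q3_spec : qstar < q3 c < 1 /\ gg (q3 c) = c.
Proof.
  unfold q3. apply epsilon_spec.
  destruct qstar_spec as [Hs HD]. pose proof qstar_sqr_gt.
  set (e := 2 * qstar ^ 2 - 1). assert (He : 0 < e) by (unfold e; lra).
  assert (HKs : 0 < ellK qstar) by (apply ellK_pos; nra).
  destruct (ellK_unbounded (ellK qstar + PI + 1 + c / e)) as [qM [HqM HK]].
  assert (Hlt : qstar < qM).
  { destruct (Rlt_le_dec qstar qM) as [H' | H']; [exact H' |].
    pose proof (ellK_le qM qstar ltac:(lra) ltac:(lra)). pose proof PI_RGT_0.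
    assert (0 <= c / e) by (apply Rdiv_le_0_compat; lra). lra. }
  assert (Hgg : c <= gg qM).
  { destruct (ellEc_bounds qM ltac:(nra)) as [_ HE].
    assert (Hce : c = c / e * e) by (field; lra).
    assert (0 <= c / e) by (apply Rdiv_le_0_compat; lra).
    set (X := ellK qM - 2 * ellEc qM).
    assert (HX : 1 + c / e <= X) by (unfold X; lra).
    assert (e <= 2 * qM ^ 2 - 1) by (unfold e; nra).
    unfold gg. replace ((2 * ellEc qM - ellK qM) ^ 2) with (X ^ 2) by (unfold X; ring).
    assert (X <= X ^ 2) by nra. assert (c / e * e <= X * e) by nra.
    assert (X * e <= X ^ 2 * (2 * qM ^ 2 - 1)) by nra. nra. }
  destruct (IVT_interv_incr gg qstar qM c) as [q [Hq Hg]]; [lra | | |].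
  - intros q Hq. apply continuity_pt_gg. rewrite Rabs_right; lra.
  - split; [unfold gg; rewrite HD; lra | exact Hgg].
  - exists q. split; [| exact Hg].
    split; [| lra].
    destruct (Req_dec q qstar) as [-> |]; [| lra].
    unfold gg in Hg. rewrite HD in Hg. lra.
Qed.

Hypothesis Hc_le : c <= lamhat.

Lemma q1_spec : 1 / sqrt 2 < q1 c <= qhat /\ gg (q1 c) = c.
Proof.
  unfold q1. apply epsilon_spec.
  destruct qhat_spec as [Hh _]. pose proof inv_sqrt2_sqr as Hs2. pose proof inv_sqrt2_pos.
  assert (Hg0 : gg (1 / sqrt 2) = 0) by (unfold gg; rewrite Hs2; field).
  destruct (IVT_interv_incr gg (1 / sqrt 2) qhat c) as [q [Hq Hg]];
    [lra | | unfold lamhat in Hc_le; lra |].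
  - intros q Hq. apply continuity_pt_gg. rewrite Rabs_right; lra.
  - exists q. split; [| exact Hg].
    split; [| lra].
    destruct (Req_dec q (1 / sqrt 2)) as [-> |]; lra.
Qed.

Lemma q2_spec : qhat <= q2 c < qstar /\ gg (q2 c) = c.
Proof.
  unfold q2. apply epsilon_spec.
  destruct qhat_spec as [Hh _]. destruct qstar_spec as [Hs HD].
  pose proof inv_sqrt2_pos. pose proof (qhat_lt_qstar ltac:(lra)).
  assert (Hg0 : gg qstar = 0) by (unfold gg; rewrite HD; ring).
  destruct (IVT_interv_decr gg qhat qstar c) as [q [Hq Hg]];
    [lra | | unfold lamhat in Hc_le; lra |].
  - intros q Hq. apply continuity_pt_gg. rewrite Rabs_right; lra.
  - exists q. split; [| exact Hg].
    split; [lra |].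
    destruct (Req_dec q qstar) as [-> |]; lra.
Qed.

End InverseOfG.

Lemma gg_pos_two_ellEc_sub_ellK_neq_0 (q : R) : 0 < gg q -> 2 * ellEc q - ellK q <> 0.
Proof. intros Hg HD. unfold gg in Hg. rewrite HD in Hg. lra. Qed.

Theorem lemma2p9 (lam l : R) (Hlam : 0 < lam) (Hl : 0 < l) :
  (lam * l ^ 2 <= lamhat ->
     symmetric_curve (gamma_sarc lam l) (L_sarc lam l) l /\
     symmetric_curve (gamma_larc lam l) (L_larc lam l) l) /\
  (symmetric_curve (gamma_loop lam l) (L_loop lam l) l /\
   exists s, 0 < s < L_loop lam l / 2 /\
     gamma_loop lam l s = gamma_loop lam l (L_loop lam l - s)).
Proof.
  unfold gamma_sarc, gamma_larc, gamma_loop, L_sarc, L_larc, L_loop, sarc_q, larc_q, loop_q.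
  assert (Hc : 0 < lam * l ^ 2) by (apply Rmult_lt_0_compat; [| apply pow_lt]; assumption).
  set (c := lam * l ^ 2) in *.
  pose proof inv_sqrt2_pos. destruct qstar_spec as [Hs _]. destruct qhat_spec as [Hh _].
  destruct (q3_spec c Hc) as [Hq3 Hg3].
  assert (HD3 : 0 < ellK (q3 c) - 2 * ellEc (q3 c)).
  { pose proof (gg_pos_two_ellEc_sub_ellK_neq_0 (q3 c) ltac:(lra)).
    pose proof (two_ellEc_sub_ellK_nonpos (q3 c) ltac:(lra)). lra. }
  split; [intros Hc_le; split | split].
  - destruct (q1_spec c Hc Hc_le) as [Hq Hg].
    apply arc_curve_symmetric; [nra | exact Hl |].
    apply gg_pos_two_ellEc_sub_ellK_neq_0. lra.
  - destruct (q2_spec c Hc Hc_le) as [Hq Hg].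
    apply arc_curve_symmetric; [nra | exact Hl |].
    apply gg_pos_two_ellEc_sub_ellK_neq_0. lra.
  - apply loop_curve_symmetric; [nra | exact Hl | lra].
  - apply loop_curve_self_intersection; [nra | exact Hl | exact HD3].
Qed.
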